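(* Let $v$ be a quadratic vector field on $\mathbb{C}^2$ having four distinct non-degenerate singular points $p_1,p_2,p_3,p_4$. Then the position $p_4$ and the pair $(\operatorname{tr}Dv(p_4),\det Dv(p_4))$ are uniquely determined by the positions $p_1,p_2,p_3$ together with the pairs $(\operatorname{tr}Dv(p_k),\det Dv(p_k))$ for $k=1,2,3$. In particular, if two such quadratic vector fields share three singular points, with the same trace and determinant of the linearization at each of them, then they share the fourth singular point, with the same trace and determinant there as well.
   Context: A quadratic vector field is $v=P\,\partial_x+Q\,\partial_y$ with $P,Q\in\mathbb{C}[x,y]$ of degree at most $2$. $Dv$ denotes the Jacobian matrix of $(P,Q)$. A singular point $p$ is a common zero of $P,Q$, and it is non-degenerate if $\det Dv(p)\ne0$. *)

From HB Require Import structures.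
From mathcomp Require Import all_boot all_order all_algebra.
Set Implicit Arguments. Unset Strict Implicit. Unset Printing Implicit Defensive.
Import Order.TTheory GRing.Theory Num.Theory.
Local Open Scope ring_scope.

Record qpoly (R : nzRingType) := QPoly {
  c00 : R; c10 : R; c01 : R; c20 : R; c11 : R; c02 : R }.

Definition qeval (R : nzRingType) (f : qpoly R) (p : R * R) : R :=
  c00 f + c10 f * p.1 + c01 f * p.2
  + c20 f * p.1 ^+ 2 + c11 f * p.1 * p.2 + c02 f * p.2 ^+ 2.

Definition qdx (R : nzRingType) (f : qpoly R) (p : R * R) : R :=
  c10 f + 2%:R * c20 f * p.1 + c11 f * p.2.
Definition qdy (R : nzRingType) (f : qpoly R) (p : R * R) : R :=
  c01 f + c11 f * p.1 + 2%:R * c02 f * p.2.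

Record qvf (R : nzRingType) := QVF { vP : qpoly R; vQ : qpoly R }.

Definition Dv (R : nzRingType) (v : qvf R) (p : R * R) : 'M[R]_2 :=
  \matrix_(i < 2, j < 2)
    (let f := if i == 0 then vP v else vQ v in
     if j == 0 then qdx f p else qdy f p).

Definition singular (R : nzRingType) (v : qvf R) (p : R * R) : Prop :=
  qeval (vP v) p = 0 /\ qeval (vQ v) p = 0.

Definition nondegenerate (R : comNzRingType) (v : qvf R) (p : R * R) : Prop :=
  \det (Dv v p) != 0.

Definition four_nondeg_sing (R : numClosedFieldType) (v : qvf R)
  (p1 p2 p3 p4 : R * R) : Prop :=
  uniq [:: p1; p2; p3; p4] /\
  (forall p, p \in [:: p1; p2; p3; p4] -> singular v p /\ nondegenerate v p).

From Pilot Require Import Defs.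
From HB Require Import structures.
From mathcomp Require Import all_boot all_order all_algebra.
From mathcomp Require Import ring.
Import Order.TTheory GRing.Theory Num.Theory.
Set Implicit Arguments. Unset Strict Implicit. Unset Printing Implicit Defensive.
Local Open Scope ring_scope.

(* Euler-Jacobi: if two conics P = Q = 0 meet in four simple points p_i,
   then sum_i phi(p_i) / J(p_i) = 0 for every affine phi, where J = det Dv.
   Taking phi = 1, x, y and tr Dv (affine, as v is quadratic), the fourth
   term of each sum is forced by the other three.
   No three of the p_i are collinear: a conic with three zeros on a line
   vanishes on it, so both gradients at p_i would be orthogonal to the line
   and J(p_i) = 0. Hence P and Q lie in the pencil spanned by the line pairs
   F = L12 L34 and G = L13 L24, so J = c J_{F,G} with c != 0, and a direct
   computation gives [p_j p_k p_l] J_{F,G}(p_i) = +- [p1 p2 p3] [p1 p2 p4]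
   [p1 p3 p4] [p2 p3 p4], where [a b c] = orient a b c. The vector
   ([p2 p3 p4], -[p1 p3 p4], [p1 p2 p4], -[p1 p2 p3]) annihilates every
   affine function. *)

Section PlaneConics.
Variable R : fieldType.
Implicit Types (f g h : Defs.qpoly R) (a b c d p : R * R).

Definition jac f g p := qdx f p * qdy g p - qdy f p * qdx g p.

Definition orient a b c :=
  (b.1 - a.1) * (c.2 - a.2) - (b.2 - a.2) * (c.1 - a.1).

Definition qdir f a b := qdx f a * (b.1 - a.1) + qdy f a * (b.2 - a.2).

Definition qform f (x y : R) := c20 f * x ^+ 2 + c11 f * x * y + c02 f * y ^+ 2.

Definition affine (phi : R * R -> R) :=
  exists (u x y : R), forall p, phi p = u + x * p.1 + y * p.2.

Lemma affine_cst (u : R) : affine (fun=> u).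
Proof. by exists u, 0, 0 => p; rewrite !mul0r !addr0. Qed.

Lemma affine_fst : affine fst.
Proof. by exists 0, 1, 0 => p; rewrite mul0r mul1r add0r addr0. Qed.

Lemma affine_snd : affine snd.
Proof. by exists 0, 0, 1 => p; rewrite !mul0r mul1r !add0r. Qed.

Definition qlin (s : R) f (t : R) g : Defs.qpoly R :=
  QPoly (s * c00 f + t * c00 g) (s * c10 f + t * c10 g) (s * c01 f + t * c01 g)
        (s * c20 f + t * c20 g) (s * c11 f + t * c11 g) (s * c02 f + t * c02 g).

Lemma qeval_lin s f t g p : qeval (qlin s f t g) p = s * qeval f p + t * qeval g p.
Proof. by rewrite /qeval /=; ring. Qed.

Lemma qdx_lin s f t g p : qdx (qlin s f t g) p = s * qdx f p + t * qdx g p.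
Proof. by rewrite /qdx /=; ring. Qed.

Lemma qdy_lin s f t g p : qdy (qlin s f t g) p = s * qdy f p + t * qdy g p.
Proof. by rewrite /qdy /=; ring. Qed.

Lemma jac_lin s f t g s' t' p :
  jac (qlin s f t g) (qlin s' f t' g) p = (s * t' - t * s') * jac f g p.
Proof. by rewrite /jac !qdx_lin !qdy_lin; ring. Qed.

Lemma qlin_sub_eq0 f g : qlin 1 f (-1) g = QPoly 0 0 0 0 0 0 -> f = g.
Proof.
case: f g => [? ? ? ? ? ?] [? ? ? ? ? ?] [] /=.
by rewrite !mul1r !mulN1r => /subr0_eq -> /subr0_eq -> /subr0_eq -> /subr0_eq ->
  /subr0_eq -> /subr0_eq ->.
Qed.

Lemma qeval_taylor f a p :
  qeval f p = qeval f a + qdir f a p + qform f (p.1 - a.1) (p.2 - a.2).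
Proof. by rewrite /qeval /qdir /qdx /qdy /qform; ring. Qed.

Lemma eq_pair_sub0 (p q : R * R) : p.1 - q.1 = 0 -> p.2 - q.2 = 0 -> p = q.
Proof. by case: p q => [? ?] [? ?] /= /subr0_eq -> /subr0_eq ->. Qed.

Lemma orient_eq0_collinear a b c : a != b -> orient a b c = 0 ->
  exists s, c.1 - a.1 = s * (b.1 - a.1) /\ c.2 - a.2 = s * (b.2 - a.2).
Proof.
move=> ab /subr0_eq o0.
have [d1 | d1] := eqVneq (b.1 - a.1) 0; last first.
  exists ((c.1 - a.1) / (b.1 - a.1)); split; first by rewrite mulfVK.
  by apply: (mulIf d1); rewrite mulrAC mulfVK // mulrC o0 mulrC.
have d2 : b.2 - a.2 != 0.
  by apply: contra_neq ab => d2; rewrite (eq_pair_sub0 d1 d2).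
exists ((c.2 - a.2) / (b.2 - a.2)); split; last by rewrite mulfVK.
move: o0; rewrite d1 mul0r mulr0 => /esym/eqP.
by rewrite mulf_eq0 (negbTE d2) => /eqP.
Qed.

Lemma qdir_eq0_on_line f a b c s :
  c.1 - a.1 = s * (b.1 - a.1) -> c.2 - a.2 = s * (b.2 - a.2) -> s != 0 -> s != 1 ->
  qeval f a = 0 -> qeval f b = 0 -> qeval f c = 0 -> qdir f a b = 0.
Proof.
move=> e1 e2 s0 s1 fa fb fc.
set Q := qform f (b.1 - a.1) (b.2 - a.2).
have hb : qdir f a b + Q = 0 by rewrite -fb (qeval_taylor f a) fa add0r.
have hc : s * qdir f a b + s ^+ 2 * Q = 0.
  by rewrite -fc (qeval_taylor f a) fa /qdir /Q /qform e1 e2; ring.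
have : s * (s - 1) * Q = 0.
  transitivity (s * qdir f a b + s ^+ 2 * Q - s * (qdir f a b + Q)); first by ring.
  by rewrite hc hb mulr0 subrr.
move/eqP; rewrite !mulf_eq0 (negbTE s0) subr_eq0 (negbTE s1) /= => /eqP Q0.
by rewrite -hb Q0 addr0.
Qed.

Lemma jac_eq0 f g a b : a != b -> qdir f a b = 0 -> qdir g a b = 0 -> jac f g a = 0.
Proof.
move=> ab fd gd; apply/eqP; apply: contraNT ab => jnz.
have e1 : jac f g a * (b.1 - a.1) = qdy g a * qdir f a b - qdy f a * qdir g a b.
  by rewrite /jac /qdir; ring.
have e2 : jac f g a * (b.2 - a.2) = qdx f a * qdir g a b - qdx g a * qdir f a b.
  by rewrite /jac /qdir; ring.
rewrite fd gd !mulr0 subr0 in e1 e2.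
move/eqP: e1; move/eqP: e2; rewrite !mulf_eq0 (negbTE jnz) /= => /eqP d2 /eqP d1.
by rewrite (eq_pair_sub0 d1 d2).
Qed.

Lemma orient_neq0 f g a b c :
  qeval f a = 0 -> qeval f b = 0 -> qeval f c = 0 ->
  qeval g a = 0 -> qeval g b = 0 -> qeval g c = 0 ->
  a != b -> a != c -> b != c -> jac f g a != 0 -> orient a b c != 0.
Proof.
move=> fa fb fc ga gb gc ab ac bc.
apply: contra_neq => /(orient_eq0_collinear ab) [s [e1 e2]].
have s0 : s != 0.
  by apply: contra_neq ac => s0; rewrite (@eq_pair_sub0 c a) // ?e1 ?e2 s0 mul0r.
have s1 : s != 1.
  apply: contra_neq bc => s1; rewrite s1 !mul1r in e1 e2.
  by case: b c e1 e2 {ab ac fb gb fc gc} => ? ? [? ?] /= /addIr -> /addIr ->.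
by apply: (jac_eq0 ab); apply: (qdir_eq0_on_line e1 e2 s0 s1).
Qed.

Lemma quadratic_form_eq0 h (x2 y2 x3 y3 x4 y4 : R) :
  x2 * y3 - y2 * x3 != 0 -> x2 * y4 - y2 * x4 != 0 -> x3 * y4 - y3 * x4 != 0 ->
  qform h x2 y2 = 0 -> qform h x3 y3 = 0 -> qform h x4 y4 = 0 ->
  [/\ c20 h = 0, c11 h = 0 & c02 h = 0].
Proof.
set d23 := x2 * y3 - y2 * x3; set d24 := x2 * y4 - y2 * x4.
set d34 := x3 * y4 - y3 * x4.
move=> n23 n24 n34 E2 E3 E4.
have V : d23 * d24 * d34 != 0 by rewrite !mulf_neq0.
(* Lagrange interpolation at the three projective points (x_i : y_i). *)
split; apply: (mulIf V); rewrite mul0r.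
- transitivity (y3 * y4 * d34 * qform h x2 y2 - y2 * y4 * d24 * qform h x3 y3
                + y2 * y3 * d23 * qform h x4 y4); first by rewrite /qform /d23 /d24 /d34; ring.
  by rewrite E2 E3 E4 !mulr0 subrr addr0.
- transitivity (- d34 * (x3 * y4 + x4 * y3) * qform h x2 y2
                + d24 * (x2 * y4 + x4 * y2) * qform h x3 y3
                - d23 * (x2 * y3 + x3 * y2) * qform h x4 y4).
    by rewrite /qform /d23 /d24 /d34; ring.
  by rewrite E2 E3 E4 !mulr0 addr0 subrr.
- transitivity (x3 * x4 * d34 * qform h x2 y2 - x2 * x4 * d24 * qform h x3 y3
                + x2 * x3 * d23 * qform h x4 y4); first by rewrite /qform /d23 /d24 /d34; ring.
  by rewrite E2 E3 E4 !mulr0 subrr addr0.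
Qed.

Definition qmul_affine (l m : R * R * R) : Defs.qpoly R :=
  QPoly (l.2 * m.2) (l.1.1 * m.2 + m.1.1 * l.2) (l.1.2 * m.2 + m.1.2 * l.2)
        (l.1.1 * m.1.1) (l.1.1 * m.1.2 + l.1.2 * m.1.1) (l.1.2 * m.1.2).

(* The affine form [p |-> orient a b p], as (x-coefficient, y-coefficient,
   constant). *)
Definition line_through a b : R * R * R :=
  (a.2 - b.2, b.1 - a.1, (b.2 - a.2) * a.1 - (b.1 - a.1) * a.2).

Definition pair_conic a b c d := qmul_affine (line_through a b) (line_through c d).

Lemma qeval_pair_conic a b c d p :
  qeval (pair_conic a b c d) p = orient a b p * orient c d p.
Proof. by rewrite /qeval /orient /=; ring. Qed.

Lemma invf_of_mul (l x C : R) : l * x = C -> C != 0 -> x^-1 = l / C.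
Proof.
move=> <- C0; rewrite invfM mulVKf //.
by apply: contraNneq C0 => ->; rewrite mul0r.
Qed.

(* The expansion along the last column of the 4 x 4 determinant with rows
   (1, p_i.1, p_i.2, phi p_i), whose last column depends on the others. *)
Lemma orient_cofactor_sum phi p1 p2 p3 p4 : affine phi ->
  phi p1 * orient p2 p3 p4 - phi p2 * orient p1 p3 p4
  + phi p3 * orient p1 p2 p4 - phi p4 * orient p1 p2 p3 = 0.
Proof. by case=> u [x [y E]]; rewrite !E /orient; ring. Qed.

Section GeneralPosition.
Variables p1 p2 p3 p4 : R * R.
Hypotheses (o123 : orient p1 p2 p3 != 0) (o124 : orient p1 p2 p4 != 0)
           (o134 : orient p1 p3 p4 != 0) (o234 : orient p2 p3 p4 != 0).

Let F := pair_conic p1 p2 p3 p4.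
Let G := pair_conic p1 p3 p2 p4.
Let K := orient p1 p2 p3 * orient p1 p2 p4 * orient p1 p3 p4 * orient p2 p3 p4.

Lemma pair_conics_vanish :
  {in [:: p1; p2; p3; p4], forall p, qeval F p = 0 /\ qeval G p = 0}.
Proof.
move=> p; rewrite !inE => /or4P [] /eqP ->;
  by rewrite !qeval_pair_conic /orient; split; ring.
Qed.

Lemma jac_pair_conics :
  [/\ orient p2 p3 p4 * jac F G p1 = K, - orient p1 p3 p4 * jac F G p2 = K,
      orient p1 p2 p4 * jac F G p3 = K & - orient p1 p2 p3 * jac F G p4 = K].
Proof. by rewrite /jac /qdx /qdy /F /G /K /orient /=; split; ring. Qed.

Lemma prod_orient_neq0 : K != 0.
Proof. by rewrite !mulf_neq0. Qed.

Lemma singular_conic_eq0 h :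
  qeval h p1 = 0 -> qdx h p1 = 0 -> qdy h p1 = 0 ->
  qeval h p2 = 0 -> qeval h p3 = 0 -> qeval h p4 = 0 -> h = QPoly 0 0 0 0 0 0.
Proof.
move=> h1 hx hy h2 h3 h4.
have hq p : qeval h p = 0 -> qform h (p.1 - p1.1) (p.2 - p1.2) = 0.
  by move=> hp; move: (qeval_taylor h p1 p); rewrite hp h1 /qdir hx hy !mul0r !add0r.
have [] := quadratic_form_eq0 o123 o124 o134 (hq _ h2) (hq _ h3) (hq _ h4).
case: h h1 hx hy {h2 h3 h4 hq} => c0 cx cy cxx cxy cyy h1 hx hy /= cxx0 cxy0 cyy0.
rewrite /qeval /qdx /qdy /= cxx0 cxy0 cyy0 !(mulr0, mul0r, addr0) in h1 hx hy.
by rewrite hx hy !(mul0r, addr0) in h1; rewrite h1 hx hy cxx0 cxy0 cyy0.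
Qed.

Lemma conic_in_pencil f : {in [:: p1; p2; p3; p4], forall p, qeval f p = 0} ->
  exists s t, f = qlin s F t G.
Proof.
move=> fz.
have J0 : jac F G p1 != 0.
  by apply: contraNneq prod_orient_neq0 => J0; have [<- _ _ _] := jac_pair_conics; rewrite J0 mulr0.
exists (jac f G p1 / jac F G p1), (jac F f p1 / jac F G p1).
apply: qlin_sub_eq0; set h := qlin 1 f (-1) _.
have hz : {in [:: p1; p2; p3; p4], forall p, qeval h p = 0}.
  move=> p pP; have [F0 G0] := pair_conics_vanish pP.
  by rewrite !qeval_lin fz // F0 G0 !mulr0 addr0 mulr0 addr0.
apply: singular_conic_eq0; rewrite ?hz ?inE ?eqxx ?orbT //.
- by move: J0; rewrite /h !qdx_lin /jac => J0; field.
- by move: J0; rewrite /h !qdy_lin /jac => J0; field.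
Qed.

Lemma orient_jac_const f g :
  {in [:: p1; p2; p3; p4], forall p, qeval f p = 0} ->
  {in [:: p1; p2; p3; p4], forall p, qeval g p = 0} -> jac f g p1 != 0 ->
  exists2 C, C != 0 &
  [/\ orient p2 p3 p4 * jac f g p1 = C, - orient p1 p3 p4 * jac f g p2 = C,
      orient p1 p2 p4 * jac f g p3 = C & - orient p1 p2 p3 * jac f g p4 = C].
Proof.
move=> /conic_in_pencil [s [t ->]] /conic_in_pencil [s' [t' ->]].
rewrite !jac_lin mulf_eq0 negb_or => /andP [c0 _].
have [K1 K2 K3 K4] := jac_pair_conics.
exists ((s * t' - t * s') * K); first by rewrite mulf_neq0 ?prod_orient_neq0.
by split; rewrite mulrCA ?K1 ?K2 ?K3 ?K4.
Qed.

Lemma euler_jacobi f g phi : affine phi ->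
  {in [:: p1; p2; p3; p4], forall p, qeval f p = 0} ->
  {in [:: p1; p2; p3; p4], forall p, qeval g p = 0} -> jac f g p1 != 0 ->
  phi p1 / jac f g p1 + phi p2 / jac f g p2 + phi p3 / jac f g p3
  + phi p4 / jac f g p4 = 0.
Proof.
move=> phi_aff fz gz jnz.
have [C C0 [E1 E2 E3 E4]] := orient_jac_const fz gz jnz.
rewrite (invf_of_mul E1 C0) (invf_of_mul E2 C0) (invf_of_mul E3 C0)
  (invf_of_mul E4 C0) -(mul0r C^-1) -(orient_cofactor_sum p1 p2 p3 p4 phi_aff).
by ring.
Qed.

End GeneralPosition.
End PlaneConics.

Lemma det_Dv (R : fieldType) (v : qvf R) p : \det (Dv v p) = jac (vP v) (vQ v) p.
Proof.
rewrite (expand_det_row _ ord0) !big_ord_recl big_ord0 /cofactor.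
by rewrite !det_mx11 !mxE /= /jac; ring.
Qed.

Lemma tr_Dv_affine (R : fieldType) (v : qvf R) : affine (fun p => \tr (Dv v p)).
Proof.
exists (c10 (vP v) + c01 (vQ v)), (2%:R * c20 (vP v) + c11 (vQ v)),
  (c11 (vP v) + 2%:R * c02 (vQ v)) => p.
by rewrite /mxtrace !big_ord_recl big_ord0 !mxE /= /qdx /qdy; ring.
Qed.

Lemma four_nondeg_sing_euler_jacobi (R : numClosedFieldType) (v : qvf R)
    (p1 p2 p3 p4 : R * R) phi :
  four_nondeg_sing v p1 p2 p3 p4 -> affine phi ->
  phi p1 / \det (Dv v p1) + phi p2 / \det (Dv v p2) + phi p3 / \det (Dv v p3)
  + phi p4 / \det (Dv v p4) = 0.
Proof.
case=> uniq_p sing phi_aff.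
have zP : {in [:: p1; p2; p3; p4], forall p, qeval (vP v) p = 0}.
  by move=> p /sing [[]].
have zQ : {in [:: p1; p2; p3; p4], forall p, qeval (vQ v) p = 0}.
  by move=> p /sing [[]].
have J p : p \in [:: p1; p2; p3; p4] -> jac (vP v) (vQ v) p != 0.
  by move=> /sing [_ nd]; rewrite -det_Dv.
have [m1 m2 m3 m4] : [/\ p1 \in [:: p1; p2; p3; p4], p2 \in [:: p1; p2; p3; p4],
    p3 \in [:: p1; p2; p3; p4] & p4 \in [:: p1; p2; p3; p4]].
  by rewrite !inE !eqxx !orbT.
move: uniq_p; rewrite /= !inE !negb_or => /and4P [/and3P [d12 d13 d14] /andP [d23 d24] d34 _].
have o := orient_neq0 (zP _ _) (zP _ _) (zP _ _) (zQ _ _) (zQ _ _) (zQ _ _).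
rewrite !det_Dv; apply: euler_jacobi phi_aff zP zQ (J _ m1).
- exact: (o p1 p2 p3 m1 m2 m3 m1 m2 m3 d12 d13 d23 (J _ m1)).
- exact: (o p1 p2 p4 m1 m2 m4 m1 m2 m4 d12 d14 d24 (J _ m1)).
- exact: (o p1 p3 p4 m1 m3 m4 m1 m3 m4 d13 d14 d34 (J _ m1)).
- exact: (o p2 p3 p4 m2 m3 m4 m2 m3 m4 d23 d24 d34 (J _ m2)).
Qed.

Section SharedSingularities.
Variables (R : numClosedFieldType) (v w : qvf R) (p1 p2 p3 p4 q4 : R * R).
Hypotheses (Hv : four_nondeg_sing v p1 p2 p3 p4) (Hw : four_nondeg_sing w p1 p2 p3 q4).
Hypothesis det_shared : {in [:: p1; p2; p3], forall p, \det (Dv v p) = \det (Dv w p)}.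

Lemma last_residue_eq phi psi : affine phi -> affine psi ->
  {in [:: p1; p2; p3], phi =1 psi} -> phi p4 / \det (Dv v p4) = psi q4 / \det (Dv w q4).
Proof.
move=> phi_aff psi_aff phi_psi.
have m p : p \in [:: p1; p2; p3] -> phi p / \det (Dv v p) = psi p / \det (Dv w p).
  by move=> pP; rewrite phi_psi // det_shared.
apply: (addrI (psi p1 / \det (Dv w p1) + psi p2 / \det (Dv w p2)
               + psi p3 / \det (Dv w p3))).
rewrite (four_nondeg_sing_euler_jacobi Hw psi_aff).
by rewrite -!m ?inE ?eqxx ?orbT // (four_nondeg_sing_euler_jacobi Hv phi_aff).
Qed.

End SharedSingularities.

Theorem lemma4p1 (R : numClosedFieldType) (v w : qvf R)
  (p1 p2 p3 p4 q4 : R * R) :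
  four_nondeg_sing v p1 p2 p3 p4 ->
  four_nondeg_sing w p1 p2 p3 q4 ->
  (forall p, p \in [:: p1; p2; p3] ->
     \tr (Dv v p) = \tr (Dv w p) /\ \det (Dv v p) = \det (Dv w p)) ->
  p4 = q4 /\ \tr (Dv v p4) = \tr (Dv w q4) /\ \det (Dv v p4) = \det (Dv w q4).
Proof.
move=> Hv Hw shared.
have dets : {in [:: p1; p2; p3], forall p, \det (Dv v p) = \det (Dv w p)}.
  by move=> p /shared [].
have residue := last_residue_eq Hv Hw dets.
have det4 : \det (Dv v p4) = \det (Dv w q4).
  apply: invr_inj; rewrite -[LHS]div1r -[RHS]div1r.
  exact: (residue _ _ (affine_cst 1) (affine_cst 1) (fun _ _ => erefl)).
have [_ nd4] : Defs.singular v p4 /\ Defs.nondegenerate v p4.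
  by apply: Hv.2; rewrite !inE eqxx !orbT.
have inv4 : (\det (Dv w q4))^-1 != 0 by rewrite invr_eq0 -det4.
have [x4 y4] : p4.1 = q4.1 /\ p4.2 = q4.2.
  split; apply: (mulIf inv4); rewrite -[in LHS]det4.
  - exact: (residue _ _ (affine_fst _) (affine_fst _) (fun _ _ => erefl)).
  - exact: (residue _ _ (affine_snd _) (affine_snd _) (fun _ _ => erefl)).
have e4 : p4 = q4 by rewrite [p4]surjective_pairing [q4]surjective_pairing x4 y4.
subst q4; split=> //; split=> //; apply: (mulIf inv4); rewrite -[in LHS]det4.
apply: (residue _ _ (tr_Dv_affine v) (tr_Dv_affine w)).
by move=> p /shared [].
Qed.
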